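(* Let $n\ge 3$ and let $\lambda,\mu$ be integers with $1\le \mu\le \lambda$ and $\lambda+\mu\le n-1$. Let $K_n^{-}(\lambda,\mu)$ denote the graph obtained from the complete graph $K_n$ by removing all edges of a subgraph isomorphic to the complete bipartite graph $K_{\lambda,\mu}$. Then $$\dim_l(K_n^{-}(\lambda,\mu))=\begin{cases} n-2, & \mu=1,\\ n-3, & \mu\ge 2.\end{cases}$$
   Context: All graphs are finite, simple and connected. For vertices $x,y$ of a graph $G$, $d_G(x,y)$ is the length of a shortest $x,y$-path. A vertex $w$ distinguishes vertices $u,v$ if $d_G(u,w)\neq d_G(v,w)$. A set $W\subseteq V(G)$ is a local resolving set of $G$ if for every pair of adjacent vertices $u,v\in V(G)\setminus W$ some vertex of $W$ distinguishes $u$ and $v$. The local metric dimension $\dim_l(G)$ is the minimum cardinality of a local resolving set of $G$. The graph $K_n^{-}(\lambda,\mu)$ does not depend (up to isomorphism) on the choice of the removed $K_{\lambda,\mu}$. *)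

From mathcomp Require Import all_boot all_order.
Set Implicit Arguments. Unset Strict Implicit. Unset Printing Implicit Defensive.

Fixpoint ball (T : finType) (e : rel T) (k : nat) (x : T) : {set T} :=
  match k with
  | 0 => [set x]
  | k'.+1 => ball e k' x :|: [set y | [exists z in ball e k' x, e z y]]
  end.

(* Graph distance d_G(x,y): least k with y within distance k of x
   (returns #|T| if y is unreachable; irrelevant for connected graphs). *)
Definition gdist (T : finType) (e : rel T) (x y : T) : nat :=
  find (fun k => y \in ball e k x) (iota 0 #|T|).

Definition local_resolving (T : finType) (e : rel T) (W : {set T}) : bool :=
  [forall u, forall v,
     ((u \notin W) && (v \notin W) && e u v) ==>
     [exists w in W, gdist e u w != gdist e v w]].

(* Local metric dimension: minimum cardinality of a local resolving set
   (the whole vertex set is always one, so #|T| is a valid default). *)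
Definition ldim (T : finType) (e : rel T) : nat :=
  \big[minn/#|T|]_(W : {set T} | local_resolving e W) #|W|.

(* K_n^-(A,B): complete graph on 'I_n with all edges between the disjoint
   vertex sets A and B removed (i.e. a K_{|A|,|B|} removed). *)
Definition Kminus_rel (n : nat) (A B : {set 'I_n}) : rel 'I_n :=
  fun x y => (x != y) &&
    ~~ (((x \in A) && (y \in B)) || ((x \in B) && (y \in A))).

From mathcomp Require Import all_boot all_order.
From mathcomp Require Import zify.

Set Implicit Arguments. Unset Strict Implicit. Unset Printing Implicit Defensive.

(* A vertex c outside A and B is adjacent to everything, so all distances are
   0, 1 or 2, and whether w distinguishes u and v only depends on which of A,
   B or the rest u, v and w lie in.  Two vertices of the same part are adjacent
   twins, so a local resolving set misses at most one vertex of each of the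
   three parts: dim_l >= n - 3, and omitting one vertex of A, one of B and c
   gives a local resolving set when mu >= 2 (a second vertex of B separates a
   from c, a second vertex of A separates b from c).  When B = {b}, a vertex of
   A and a vertex outside A and B can only be separated by b, so the
   complement cannot meet all three parts: dim_l >= n - 2, attained by
   omitting a vertex of A and c. *)

Section LocalMetricDimension.
Variables (T : finType) (e : rel T).

Lemma ldim_le (W : {set T}) : local_resolving e W -> ldim e <= #|W|.
Proof.
rewrite /ldim -big_filter => resW.
have : W \in [seq W <- index_enum _ | local_resolving e W].
  by rewrite mem_filter resW mem_index_enum.
elim: (filter _ _) => [|W' s IH] //; rewrite big_cons in_cons.
by case/orP=> [/eqP <- | /IH le_s]; rewrite geq_min ?leqnn ?le_s ?orbT.
Qed.

Lemma ldim_ge k :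
  k <= #|T| -> (forall W, local_resolving e W -> k <= #|W|) -> k <= ldim e.
Proof.
move=> kT kW; apply: (big_ind (fun m => k <= m)) => // m1 m2 k1 k2.
by rewrite leq_min k1 k2.
Qed.

Lemma local_resolvingP (W : {set T}) :
  reflect (forall u v, u \notin W -> v \notin W -> e u v ->
             exists2 w, w \in W & gdist e u w != gdist e v w)
          (local_resolving e W).
Proof.
apply: (iffP forallP) => [resW u v uW vW euv | resW u].
  have /forallP/(_ v) := resW u; rewrite uW vW euv /= => /existsP[w /andP[]].
  by exists w.
apply/forallP => v; apply/implyP => /andP[/andP[uW vW] euv].
by have [w wW sep] := resW u v uW vW euv; apply/existsP; exists w; rewrite wW.
Qed.

Lemma mem_ball1 x y : (y \in ball e 1 x) = (y == x) || e x y.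
Proof.
rewrite /= in_setU in_set1 inE; congr orb.
apply/existsP/idP => [[z /andP[/set1P -> //]] | exy].
by exists x; rewrite in_set1 eqxx.
Qed.

Lemma gdist_universal c x y :
  (forall z, z != c -> e c z && e z c) -> 2 < #|T| ->
  gdist e x y = if x == y then 0 else if e x y then 1 else 2.
Proof.
move=> univ T3; rewrite /gdist; case: #|T| T3 => [|[|[|k]]] //= _.
rewrite in_set1 mem_ball1 (eq_sym y x); case: eqP => //= xy.
case: ifP => //= nexy; suff -> : y \in ball e 2 x by [].
rewrite [ball e 2 x]/= in_setU inE; apply/orP; right; apply/existsP; exists c.
have [xc | xc] := eqVneq x c.
  have yc : y != c by rewrite -xc eq_sym; apply/eqP.
  by move: (univ y yc) nexy; rewrite xc => /andP[->].
have [yc | yc] := eqVneq y c.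
  by move: (univ x xc) nexy; rewrite yc => /andP[_ ->].
by rewrite mem_ball1 (andP (univ x xc)).2 orbT (andP (univ y yc)).1.
Qed.

End LocalMetricDimension.

Section CompleteMinusBiclique.
Variables (n : nat) (A B : {set 'I_n}) (c : 'I_n).
Hypotheses (disjAB : [disjoint A & B]) (cA : c \notin A) (cB : c \notin B).
Hypothesis n_gt2 : 2 < n.

Local Notation K := (Kminus_rel A B).

Lemma Kminus_irr : irreflexive K.
Proof. by move=> x; rewrite /Kminus_rel eqxx. Qed.

Lemma Kminus_sym : symmetric K.
Proof.
by move=> x y; rewrite /Kminus_rel eq_sym (andbC (y \in A)) (andbC (y \in B)) orbC.
Qed.

Lemma Kminus_AB x y : x \in A -> y \in B -> ~~ K x y.
Proof. by move=> xA yB; rewrite /Kminus_rel xA yB andbF. Qed.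

Lemma neq_AB x y : x \in A -> y \in B -> x != y.
Proof. by move=> xA yB; apply: contraTneq xA => ->; rewrite (disjointFl disjAB). Qed.

Lemma Kminus_outside z w : z \notin A -> z \notin B -> K z w = (z != w).
Proof. by move=> zA zB; rewrite /Kminus_rel (negbTE zA) (negbTE zB) andbT. Qed.

Lemma Kminus_gdist x y :
  gdist K x y = if x == y then 0 else if K x y then 1 else 2.
Proof.
apply: (@gdist_universal _ _ c) => [z zc|]; last by rewrite card_ord.
by rewrite [K z c]Kminus_sym andbb Kminus_outside // eq_sym.
Qed.

Lemma Kminus_distinguish x z w :
  z \notin A -> z \notin B -> z != w -> ~~ K x w -> gdist K x w != gdist K z w.
Proof.
move=> zA zB zw Kxw; rewrite !Kminus_gdist (negbTE Kxw) Kminus_outside // zw.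
by rewrite (negbTE zw); case: (x == w).
Qed.

Definition part x := (x \in A, x \in B).

Lemma part_neqAB x : part x \in [set~ (true, true)].
Proof.
rewrite !inE /part; case xA: (x \in A) => //.
by rewrite (disjointFr disjAB xA).
Qed.

Lemma Kminus_twins u v w :
  part u = part v -> w != u -> w != v -> gdist K u w = gdist K v w.
Proof.
case=> uA uB wu wv.
by rewrite !Kminus_gdist /Kminus_rel uA uB ![_ == w]eq_sym (negbTE wu) (negbTE wv).
Qed.

Lemma local_resolving_part_inj W :
  local_resolving K W -> {in ~: W &, injective part}.
Proof.
move=> /local_resolvingP resW u v; rewrite !inE => uW vW puv.
apply/eqP; apply: contraT => uv.
have Kuv : K u v.
  have := part_neqAB u; rewrite /Kminus_rel uv !inE /part.
  by case: puv => <- <-; case: (u \in A); case: (u \in B).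
have [w wW] := resW u v uW vW Kuv.
by rewrite (Kminus_twins puv) ?eqxx ?(memPn uW) ?(memPn vW).
Qed.

Lemma local_resolving_meets_B W x z :
  local_resolving K W -> x \in A -> z \notin A -> z \notin B ->
  x \notin W -> z \notin W -> exists2 w, w \in W & w \in B.
Proof.
move=> /local_resolvingP resW xA zA zB xW zW.
have xz : x != z by apply: contraTneq xA => ->.
have Kxz : K x z by rewrite Kminus_sym Kminus_outside // eq_sym.
have [w wW sep] := resW x z xW zW Kxz.
exists w => //; apply: contraTT sep => wB; apply/eqP.
have xw : x != w by rewrite eq_sym (memPn xW).
have zw : z != w by rewrite eq_sym (memPn zW).
by rewrite !Kminus_gdist /Kminus_rel (negbTE xw) (negbTE zw) (negbTE wB)
  (disjointFr disjAB xA) (negbTE zA) (negbTE zB) !andbF.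
Qed.

Lemma card_parts : #|[set~ (true, true)]| = 3.
Proof. by rewrite cardsC1 card_prod card_bool. Qed.

Lemma local_resolving_card_setC W :
  local_resolving K W -> #|~: W| = #|part @: ~: W|.
Proof. by move=> /local_resolving_part_inj/card_in_imset ->. Qed.

Lemma part_imset_sub W : (part @: ~: W) \subset [set~ (true, true)].
Proof. by apply/subsetP => _ /imsetP[x _ ->]; apply: part_neqAB. Qed.

Lemma local_resolving_card_ge W : local_resolving K W -> n - 3 <= #|W|.
Proof.
move=> resW; have : #|~: W| <= 3.
  by rewrite local_resolving_card_setC // -card_parts subset_leq_card ?part_imset_sub.
by have := cardsC W; rewrite card_ord; lia.
Qed.

Lemma local_resolving_card_ge_single W :
  #|B| = 1 -> local_resolving K W -> n - 2 <= #|W|.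
Proof.
move=> B1 resW; suff : #|~: W| < 3 by have := cardsC W; rewrite card_ord; lia.
rewrite local_resolving_card_setC // -card_parts; apply: proper_card.
have [allparts | //] := eqVproper (part_imset_sub W).
have hit p : p != (true, true) -> exists2 x, x \notin W & part x = p.
  move=> p_ok; have : p \in part @: ~: W by rewrite allparts !inE.
  by case/imsetP=> x; rewrite inE => xW ->; exists x.
have [x xW [xA _]] := hit (true, false) isT.
have [z zW [/negbT zA /negbT zB]] := hit (false, false) isT.
have [y yW [_ yB]] := hit (false, true) isT.
have [w wW wB] := local_resolving_meets_B resW xA zA zB xW zW.
have /card_le1_eqP/(_ w y wB yB) wy : #|B| <= 1 by rewrite B1.
by move: wW; rewrite -wy (negbTE yW).
Qed.

Lemma local_resolving_setC2 a b :
  a \in A -> b \in B -> local_resolving K (~: [set a; c]).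
Proof.
move=> aA bB; have bW : b \in ~: [set a; c].
  by rewrite !inE negb_or eq_sym neq_AB //=; apply: contraTneq bB => ->.
have sep := Kminus_distinguish cA cB (memPnC cB b bB) (Kminus_AB aA bB).
apply/local_resolvingP => u v; rewrite !inE !negbK.
move=> /pred2P[]-> /pred2P[]->; rewrite ?Kminus_irr // => _.
  by exists b.
by exists b; rewrite // eq_sym.
Qed.

Lemma local_resolving_setC3 a a' b b' :
  a \in A -> a' \in A -> b \in B -> b' \in B -> a' != a -> b' != b ->
  local_resolving K (~: [set a; b; c]).
Proof.
move=> aA a'A bB b'B a'a b'b.
have a'W : a' \in ~: [set a; b; c].
  by rewrite !inE !negb_or a'a neq_AB //=; apply: contraTneq a'A => ->.
have b'W : b' \in ~: [set a; b; c].
  rewrite !inE !negb_or b'b eq_sym neq_AB //=; apply: contraTneq b'B => ->.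
  by rewrite (negbTE cB).
have sepAc := Kminus_distinguish cA cB (memPnC cB b' b'B) (Kminus_AB aA b'B).
have Kba' : ~~ K b a' by rewrite Kminus_sym Kminus_AB.
have sepBc := Kminus_distinguish cA cB (memPnC cA a' a'A) Kba'.
have Kab : K a b = false by apply: negbTE; apply: Kminus_AB.
have Kba : K b a = false by rewrite Kminus_sym.
apply/local_resolvingP => u v; rewrite !inE !negbK -!orbA.
move=> /or3P[]/eqP-> /or3P[]/eqP->; rewrite ?Kminus_irr ?Kab ?Kba // => _.
- by exists b'.
- by exists a'.
- by exists b'; rewrite // eq_sym.
- by exists a'; rewrite // eq_sym.
Qed.

End CompleteMinusBiclique.

Theorem lemma2p1 (n lambda mu : nat) (A B : {set 'I_n}) :
  3 <= n -> 1 <= mu -> mu <= lambda -> lambda + mu <= n - 1 ->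
  [disjoint A & B] -> #|A| = lambda -> #|B| = mu ->
  ldim (Kminus_rel A B) = (if mu == 1 then n - 2 else n - 3).
Proof.
move=> n3 mu_gt0 mu_le sum_le dAB cardA cardB.
have [c] : exists c, c \in ~: (A :|: B).
  apply/card_gt0P; have := cardsC (A :|: B).
  rewrite cardsU (disjoint_setI0 dAB) cards0 card_ord cardA cardB; lia.
rewrite !inE negb_or => /andP[cA cB].
have [a aA] : exists a, a \in A by apply/card_gt0P; lia.
have [b bB] : exists b, b \in B by apply/card_gt0P; lia.
have cardCE (S : {set 'I_n}) : #|~: S| = n - #|S| by rewrite cardsCs setCK card_ord.
apply/eqP; rewrite eqn_leq; case: eqP => [mu_eq1 | mu_neq1]; apply/andP; split.
- apply: leq_trans (ldim_le (local_resolving_setC2 dAB cA cB n3 aA bB)) _.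
  by rewrite cardCE cards2 (memPn cA a aA).
- apply: ldim_ge; rewrite ?card_ord ?leq_subr // => W.
  exact: local_resolving_card_ge_single dAB cA cB n3 _ (etrans cardB mu_eq1).
- have [a'] : exists a', a' \in A :\ a.
    by apply/card_gt0P; have := cardsD1 a A; rewrite aA cardA; lia.
  have [b'] : exists b', b' \in B :\ b.
    by apply/card_gt0P; have := cardsD1 b B; rewrite bB cardB; lia.
  rewrite !inE => /andP[b'b b'B] /andP[a'a a'A].
  have resW := local_resolving_setC3 dAB cA cB n3 aA a'A bB b'B a'a b'b.
  apply: leq_trans (ldim_le resW) _.
  have ab := neq_AB dAB aA bB; have ac := memPn cA a aA; have bc := memPn cB b bB.
  by rewrite cardCE -setUA cardsU1 cards2 !inE negb_or ab ac bc.
- apply: ldim_ge; rewrite ?card_ord ?leq_subr // => W.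
  exact: (local_resolving_card_ge dAB cA cB n3).
Qed.
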